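(* The unique typical subrank of real $3\times3\times3$ tensors is $2$, and the unique typical subrank of real $3\times3\times4$ tensors is $2$.
   Context: For $r \geq 0$ let $I_r := \sum_{j=1}^r e_j \otimes e_j \otimes e_j$. The subrank of $T \in \mathbb{R}^{n_1} \otimes \mathbb{R}^{n_2} \otimes \mathbb{R}^{n_3}$ is $Q(T) := \max\{ r \mid \exists\ \mathbb{R}\text{-linear } \varphi_i : \mathbb{R}^{n_i} \to \mathbb{R}^r,\ (\varphi_1 \otimes \varphi_2 \otimes \varphi_3) T = I_r\}$. An integer $r$ is a typical subrank of the format $n_1\times n_2\times n_3$ if $\{T \mid Q(T) = r\}$ contains a nonempty Euclidean-open subset of $\mathbb{R}^{n_1} \otimes \mathbb{R}^{n_2} \otimes \mathbb{R}^{n_3}$. *)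

From HB Require Import structures.
From mathcomp Require Import all_boot all_order all_algebra.
From mathcomp Require Import reals.
Set Implicit Arguments. Unset Strict Implicit. Unset Printing Implicit Defensive.
Import Order.TTheory GRing.Theory Num.Theory.
Local Open Scope ring_scope.

(* A tensor in R^n1 (x) R^n2 (x) R^n3, given by its coordinates in the
   standard basis: T i j k is the coefficient of e_i (x) e_j (x) e_k. *)
Definition tensor (R : Type) (n1 n2 n3 : nat) := 'I_n1 -> 'I_n2 -> 'I_n3 -> R.

Definition unit_tensor (R : nzRingType) (r : nat) : tensor R r r r :=
  fun a b c => if (a == b) && (b == c) then 1 else 0.

(* (phi1 (x) phi2 (x) phi3) T, where the linear maps phi_i : R^{n_i} -> R^r
   are given by their r x n_i matrices. *)
Definition tensor_map (R : nzRingType) (n1 n2 n3 m1 m2 m3 : nat)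
  (A1 : 'M[R]_(m1, n1)) (A2 : 'M[R]_(m2, n2)) (A3 : 'M[R]_(m3, n3))
  (T : tensor R n1 n2 n3) : tensor R m1 m2 m3 :=
  fun a b c => \sum_(i < n1) \sum_(j < n2) \sum_(k < n3)
                 A1 a i * A2 b j * A3 c k * T i j k.

Definition restricts_to_unit (R : nzRingType) (n1 n2 n3 : nat)
  (T : tensor R n1 n2 n3) (r : nat) : Prop :=
  exists (A1 : 'M[R]_(r, n1)) (A2 : 'M[R]_(r, n2)) (A3 : 'M[R]_(r, n3)),
    tensor_map A1 A2 A3 T = @unit_tensor R r.

Definition is_subrank (R : nzRingType) (n1 n2 n3 : nat)
  (T : tensor R n1 n2 n3) (r : nat) : Prop :=
  restricts_to_unit T r /\ (forall s, restricts_to_unit T s -> (s <= r)%N).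

(* Euclidean-open subsets of R^n1 (x) R^n2 (x) R^n3 (topology of the
   coordinatewise max-norm, which is the Euclidean topology). *)
Definition euclid_open (R : realType) (n1 n2 n3 : nat)
  (U : tensor R n1 n2 n3 -> Prop) : Prop :=
  forall T, U T -> exists2 eps : R, 0 < eps &
    forall T' : tensor R n1 n2 n3,
      (forall i j k, `|T' i j k - T i j k| < eps) -> U T'.

Definition typical_subrank (R : realType) (n1 n2 n3 r : nat) : Prop :=
  exists U : tensor R n1 n2 n3 -> Prop,
    euclid_open U /\ (exists T, U T) /\
    (forall T, U T -> is_subrank T r).

From HB Require Import structures.
From mathcomp Require Import all_boot all_order all_algebra.
From mathcomp Require Import reals ring lra.
From Stdlib Require Import FunctionalExtensionality.
Set Implicit Arguments. Unset Strict Implicit. Unset Printing Implicit Defensive.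
Import Order.TTheory GRing.Theory Num.Theory.
Local Open Scope ring_scope.

(* For each format there is a polynomial P in the coordinates, nonzero at an
   explicit tensor, such that Q(T) = 2 whenever P(T) != 0.  The set
   {P != 0} is then open and nonempty, and it meets every nonempty open set,
   because a polynomial that is nonzero somewhere has finitely many zeros on
   every line through that point; so 2 is a typical subrank and no other
   value is.
   P is a product of two factors.  The first certifies Q(T) >= 2: vectors
   orthogonal to the first rows (columns) of the first two slices make both
   slices diagonal on a two-dimensional subspace, and the factor is the
   determinant of the diagonal entries.  The second certifies Q(T) <= 2 for
   3 x 3 x 4 tensors: if T restricts to I_3, every row y of the third map
   gives a rank-one slice sum_k y_k T_k, so the nine 2 x 2 minors of that
   slice, quadratic forms in y, vanish at two independent vectors y.  A
   combination of their monomial vectors with no y_3^2 term is then a nonzero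
   kernel vector of the 9 x 9 matrix of coefficients of the minors on the
   other monomials, and the factor is its determinant.  A 3 x 3 x 3 tensor is
   handled by appending a fixed fourth slice. *)

Lemma tensor_ext (R : Type) n1 n2 n3 (T T' : tensor R n1 n2 n3) :
  (forall i j k, T i j k = T' i j k) -> T = T'.
Proof. by move=> eqT; do 3 apply: functional_extensionality => ?; apply: eqT. Qed.

(** * Regular functions on tensors *)

Section Continuity2.
Variable R : realFieldType.

Definition continuous2 (op : R -> R -> R) := forall x y e : R, 0 < e ->
  exists2 d : R, 0 < d & forall x' y',
    `|x' - x| < d -> `|y' - y| < d -> `|op x' y' - op x y| < e.

Lemma continuous2_add : continuous2 +%R.
Proof.
move=> x y e e_gt0; exists (e / 2) => [|x' y' hx hy]; first by rewrite divr_gt0.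
rewrite (_ : _ + _ - _ = (x' - x) + (y' - y)); last by ring.
by apply: le_lt_trans (ler_normD _ _) _; rewrite [e](splitr e) ltrD.
Qed.

Lemma continuous2_mul : continuous2 *%R.
Proof.
move=> x y e e_gt0; set K := `|x| + `|y| + 1.
have K_gt0 : 0 < K by rewrite ltr_wpDl ?addr_ge0.
exists (Num.min 1 (e / K)) => [|x' y']; first by rewrite lt_min ltr01 divr_gt0.
rewrite !lt_min => /andP[hx1 hxe] /andP[hy1 hye].
have hy' : `|y'| <= `|y| + 1.
  rewrite (_ : y' = y + (y' - y)); last by ring.
  by apply: le_trans (ler_normD _ _) _; rewrite lerD2l ltW.
rewrite (_ : _ * _ - _ = (x' - x) * y' + x * (y' - y)); last by ring.
apply: le_lt_trans (ler_normD _ _) _; rewrite !normrM.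
have -> : e = e / K * K by rewrite divfK ?gt_eqF.
apply: (@lt_le_trans _ _ (e / K * (`|y| + 1) + `|x| * (e / K))).
  apply: ltr_leD; last exact/ler_wpM2l/ltW.
  apply: le_lt_trans (ler_wpM2l (normr_ge0 _) hy') _.
  by rewrite ltr_pM2r // ltr_wpDl.
by rewrite [leRHS](_ : _ = e / K * (`|y| + 1) + `|x| * (e / K)) // /K; ring.
Qed.

End Continuity2.

Section RegularFunctions.
Variables (R : realFieldType) (n1 n2 n3 : nat).
Local Notation tens := (tensor R n1 n2 n3).

Definition tensor_line (T D : tens) (t : R) : tens :=
  fun i j k => T i j k + t * D i j k.

Definition poly_on_lines (f : tens -> R) :=
  forall T D : tens, exists P : {poly R}, forall t, f (tensor_line T D t) = P.[t].

Definition tensor_near (d : R) (T' T : tens) :=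
  forall i j k, `|T' i j k - T i j k| < d.

Definition tensor_continuous (f : tens -> R) := forall (T : tens) (e : R), 0 < e ->
  exists2 d : R, 0 < d & forall T', tensor_near d T' T -> `|f T' - f T| < e.

(* The two properties of polynomial functions of the coordinates that the
   argument uses. *)
Definition regular (f : tens -> R) := poly_on_lines f /\ tensor_continuous f.

Lemma eq_regular (f g : tens -> R) : f =1 g -> regular f -> regular g.
Proof. by move=> /functional_extensionality ->. Qed.

Lemma regular_cst (c : R) : regular (fun _ => c).
Proof.
split; first by move=> T D; exists c%:P => t; rewrite hornerC.
by move=> T e e_gt0; exists 1 => // T' _; rewrite subrr normr0.
Qed.

Lemma regular_coord i j k : regular (fun T => T i j k).
Proof.
split; last by move=> T e e_gt0; exists e => // T'; apply.
move=> T D; exists ((T i j k)%:P + (D i j k)%:P * 'X) => t.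
by rewrite hornerD hornerC hornerMX hornerC mulrC.
Qed.

Lemma tensor_continuous2 (op : R -> R -> R) (f g : tens -> R) : continuous2 op ->
  tensor_continuous f -> tensor_continuous g ->
  tensor_continuous (fun T => op (f T) (g T)).
Proof.
move=> op_cont f_cont g_cont T e e_gt0.
have [d d_gt0 hop] := op_cont (f T) (g T) e e_gt0.
have [df df_gt0 hf] := f_cont T d d_gt0; have [dg dg_gt0 hg] := g_cont T d d_gt0.
exists (Num.min df dg) => [|T' near_T']; first by rewrite lt_min df_gt0.
by apply: hop; [apply: hf | apply: hg] => i j k;
  have := near_T' i j k; rewrite lt_min => /andP[].
Qed.

Lemma regularD (f g : tens -> R) : regular f -> regular g -> regular (fun T => f T + g T).
Proof.
move=> [f_poly f_cont] [g_poly g_cont]; split; last first.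
  exact: tensor_continuous2 (@continuous2_add R) f_cont g_cont.
move=> T D; have [P fP] := f_poly T D; have [Q gQ] := g_poly T D.
by exists (P + Q) => t; rewrite hornerD fP gQ.
Qed.

Lemma regularM (f g : tens -> R) : regular f -> regular g -> regular (fun T => f T * g T).
Proof.
move=> [f_poly f_cont] [g_poly g_cont]; split; last first.
  exact: tensor_continuous2 (@continuous2_mul R) f_cont g_cont.
move=> T D; have [P fP] := f_poly T D; have [Q gQ] := g_poly T D.
by exists (P * Q) => t; rewrite hornerM fP gQ.
Qed.

Lemma regularN (f : tens -> R) : regular f -> regular (fun T => - f T).
Proof.
by move=> f_reg; apply: eq_regular (regularM (regular_cst (-1)) f_reg) => T; rewrite mulN1r.
Qed.

Lemma regularB (f g : tens -> R) : regular f -> regular g -> regular (fun T => f T - g T).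
Proof. by move=> f_reg g_reg; apply: regularD f_reg (regularN g_reg). Qed.

Lemma regular_sum (I : Type) (r : seq I) (P : pred I) (F : I -> tens -> R) :
  (forall i, P i -> regular (F i)) -> regular (fun T => \sum_(i <- r | P i) F i T).
Proof.
move=> F_reg; elim: r => [|x r IH].
  by apply: eq_regular (regular_cst 0) => T; rewrite big_nil.
case Px: (P x); last by apply: eq_regular IH => T; rewrite big_cons Px.
by apply: eq_regular (regularD (F_reg x Px) IH) => T; rewrite big_cons Px.
Qed.

Lemma regular_prod (I : Type) (r : seq I) (P : pred I) (F : I -> tens -> R) :
  (forall i, P i -> regular (F i)) -> regular (fun T => \prod_(i <- r | P i) F i T).
Proof.
move=> F_reg; elim: r => [|x r IH].
  by apply: eq_regular (regular_cst 1) => T; rewrite big_nil.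
case Px: (P x); last by apply: eq_regular IH => T; rewrite big_cons Px.
by apply: eq_regular (regularM (F_reg x Px) IH) => T; rewrite big_cons Px.
Qed.

Lemma regular_det m (M : tens -> 'M[R]_m) :
  (forall i j, regular (fun T => M T i j)) -> regular (fun T => \det (M T)).
Proof.
move=> M_reg; apply: regular_sum => s _.
by apply: regularM; [exact: regular_cst | apply: regular_prod => i _].
Qed.

End RegularFunctions.

Section Density.
Variables (R : realFieldType) (n1 n2 n3 : nat).
Local Notation tens := (tensor R n1 n2 n3).

Lemma poly_nonroot_near0 (P : {poly R}) (d : R) : P != 0 -> 0 < d ->
  exists2 t, 0 < t <= d & P.[t] != 0.
Proof.
move=> P_neq0 d_gt0; pose t k := d / k.+1%:R.
have t_inj : injective t.
  by move=> a b /(mulfI (lt0r_neq0 d_gt0)) /invr_inj /eqP; rewrite eqr_nat eqSS => /eqP.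
have : ~~ all (root P) (map t (iota 0 (size P))).
  apply/negP => /(max_poly_roots P_neq0).
  by rewrite map_inj_uniq // iota_uniq size_map size_iota ltnn => /(_ isT).
case/allPn => _ /mapP [k _ ->] Ptk_neq0; exists (t k) => //.
by rewrite divr_gt0 ?ltr0n //= ler_pdivrMr ?ltr0n // ler_peMr ?(ltW d_gt0) // ler1n.
Qed.

Lemma tensor_bounded (V : tens) : exists2 B : R, 0 < B & forall i j k, `|V i j k| < B.
Proof.
pose F (x : 'I_n1 * 'I_n2 * 'I_n3) : R := `|V x.1.1 x.1.2 x.2|.
pose M := \big[Order.max/0]_x F x.
have M_ge0 : 0 <= M by apply: bigmax_ge_id.
exists (M + 1) => [|i j k]; first by rewrite ltr_wpDl.
by rewrite ltr_pwDr // (le_bigmax 0 F (i, j, k)).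
Qed.

Lemma poly_on_lines_neq0_near (f : tens -> R) (D : tens) :
  poly_on_lines f -> f D != 0 ->
  forall (T : tens) (e : R), 0 < e -> exists2 T', tensor_near e T' T & f T' != 0.
Proof.
move=> f_poly fD_neq0 T e e_gt0.
pose V : tens := fun i j k => D i j k - T i j k.
have [P fP] := f_poly T V.
have P_neq0 : P != 0.
  apply: contraNneq fD_neq0 => P0.
  have -> : D = tensor_line T V 1.
    by apply: tensor_ext => i j k; rewrite /tensor_line /V mul1r addrC subrK.
  by rewrite fP P0 horner0.
have [B B_gt0 V_lt] := tensor_bounded V.
have [t /andP[t_gt0 t_le] Pt_neq0] := poly_nonroot_near0 P_neq0 (divr_gt0 e_gt0 B_gt0).
exists (tensor_line T V t); last by rewrite fP.
move=> i j k; rewrite /tensor_line addrAC subrr add0r normrM gtr0_norm //.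
apply: le_lt_trans (ler_wpM2r (normr_ge0 _) t_le) _.
by rewrite -[ltRHS](divfK (lt0r_neq0 B_gt0)) ltr_pM2l ?divr_gt0.
Qed.

End Density.

(** * Restrictions *)

Definition tslice (R : Type) n1 n2 n3 (T : tensor R n1 n2 n3) (k : 'I_n3) :
  'I_n1 -> 'I_n2 -> R := fun i j => T i j k.

Section Restriction.
Variables (R : nzRingType) (n1 n2 : nat).

Lemma is_subrank_uniq n3 (T : tensor R n1 n2 n3) r s :
  is_subrank T r -> is_subrank T s -> r = s.
Proof. by move=> [Tr r_max] [Ts s_max]; apply/eqP; rewrite eqn_leq r_max ?s_max. Qed.

Lemma restricts_to_unit_le n3 (T : tensor R n1 n2 n3) r s :
  (s <= r)%N -> restricts_to_unit T r -> restricts_to_unit T s.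
Proof.
move=> le_sr [A1 [A2 [A3 TI]]].
exists (\matrix_(a, i) A1 (widen_ord le_sr a) i).
exists (\matrix_(a, j) A2 (widen_ord le_sr a) j).
exists (\matrix_(a, k) A3 (widen_ord le_sr a) k).
apply: tensor_ext => a b c.
have := congr1 (fun I => I (widen_ord le_sr a) (widen_ord le_sr b) (widen_ord le_sr c)) TI.
rewrite /tensor_map /unit_tensor /= => <-.
by apply: eq_bigr => i _; apply: eq_bigr => j _; apply: eq_bigr => k _; rewrite !mxE.
Qed.

Lemma is_subrankP n3 (T : tensor R n1 n2 n3) r :
  restricts_to_unit T r -> ~ restricts_to_unit T r.+1 -> is_subrank T r.
Proof.
move=> Tr not_Tr1; split=> // s Ts; rewrite leqNgt; apply/negP => lt_rs.
exact/not_Tr1/(restricts_to_unit_le lt_rs).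
Qed.

Definition front_slices m n (le_mn : (m <= n)%N) (T : tensor R n1 n2 n) :
  tensor R n1 n2 m := fun i j k => T i j (widen_ord le_mn k).

Lemma restricts_to_unit_front m n (le_mn : (m <= n)%N) (T : tensor R n1 n2 n) r :
  restricts_to_unit (front_slices le_mn T) r -> restricts_to_unit T r.
Proof.
move=> [A1 [A2 [A3 TI]]].
exists A1, A2, (\matrix_(c, k) \sum_(l < m | widen_ord le_mn l == k) A3 c l).
rewrite -TI; apply: tensor_ext => a b c; apply: eq_bigr => i _; apply: eq_bigr => j _.
under eq_bigr do rewrite mxE mulr_sumr mulr_suml.
rewrite (exchange_big_dep xpredT) //=; apply: eq_bigr => l _.
by rewrite (big_pred1 (widen_ord le_mn l)) // => k; rewrite eq_sym.
Qed.

Definition add_slice n (T : tensor R n1 n2 n) (S : 'I_n1 -> 'I_n2 -> R) :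
  tensor R n1 n2 n.+1 :=
  fun i j k => if unlift ord_max k is Some k' then T i j k' else S i j.

Lemma widen_ord_max n (k : 'I_n) : widen_ord (leqnSn n) k = lift ord_max k.
Proof. by apply: ord_inj; rewrite lift_max. Qed.

Lemma front_add_slice n (T : tensor R n1 n2 n) S :
  front_slices (leqnSn n) (add_slice T S) = T.
Proof. by apply: tensor_ext => i j k; rewrite /front_slices /add_slice widen_ord_max liftK. Qed.

Lemma add_slice_front n (T : tensor R n1 n2 n.+1) :
  add_slice (front_slices (leqnSn n) T) (tslice T ord_max) = T.
Proof.
apply: tensor_ext => i j k; rewrite /add_slice /front_slices.
by case: unliftP => [k' ->|-> //]; rewrite widen_ord_max.
Qed.

End Restriction.

Section Typical.
Variables (R : realType) (n1 n2 n3 : nat).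
Local Notation tens := (tensor R n1 n2 n3).

Lemma euclid_open_neq0 (f : tens -> R) :
  tensor_continuous f -> euclid_open (fun T => f T != 0).
Proof.
move=> f_cont T fT_neq0; have fT_gt0 : 0 < `|f T| by rewrite normr_gt0.
have [d d_gt0 near_f] := f_cont T _ fT_gt0.
by exists d => // T' /near_f; apply: contraTneq => ->; rewrite sub0r normrN ltxx.
Qed.

Lemma typical_subrank_of_regular (P : tens -> R) (D : tens) r :
  regular P -> P D != 0 -> (forall T, P T != 0 -> is_subrank T r) ->
  forall s, typical_subrank R n1 n2 n3 s <-> s = r.
Proof.
move=> [P_poly P_cont] PD_neq0 P_subrank s.
split=> [[U [U_open [[T UT] U_subrank]]] | ->].
  have [e e_gt0 near_U] := U_open T UT.
  have [T' near_T' PT'_neq0] := poly_on_lines_neq0_near P_poly PD_neq0 T e_gt0.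
  exact: is_subrank_uniq (U_subrank T' (near_U T' near_T')) (P_subrank T' PT'_neq0).
exists (fun T => P T != 0); split; first exact: euclid_open_neq0.
by split; [exists D|].
Qed.

End Typical.

Lemma ord2_cases (k : 'I_2) : k = ord0 \/ k = ord_max.
Proof. by case: k => [[|[|//]] ?]; [left | right]; apply: val_inj. Qed.

Lemma big_ord2 (R : nmodType) (F : 'I_2 -> R) : \sum_(k < 2) F k = F ord0 + F ord_max.
Proof. by rewrite big_ord_recl big_ord1; congr (_ + F _); apply: val_inj. Qed.

Lemma det_mx22 (R : comNzRingType) (A : 'M[R]_2) :
  \det A = A ord0 ord0 * A ord_max ord_max - A ord0 ord_max * A ord_max ord0.
Proof.
rewrite (expand_det_row _ ord0) big_ord2 /cofactor !det_mx11 !mxE /=.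
have -> : lift ord0 (0 : 'I_1) = ord_max by apply: val_inj.
have -> : lift ord_max (0 : 'I_1) = ord0 by apply: val_inj.
by rewrite expr0 expr1 mul1r mulN1r mulrN.
Qed.

Definition i0 : 'I_3 := @Ordinal 3 0 isT.
Definition i1 : 'I_3 := @Ordinal 3 1 isT.
Definition i2 : 'I_3 := @Ordinal 3 2 isT.

Lemma big_ord3 (R : nmodType) (F : 'I_3 -> R) : \sum_(i < 3) F i = F i0 + F i1 + F i2.
Proof.
by rewrite !big_ord_recl big_ord0 addr0 addrA; congr (F _ + F _ + F _); apply: val_inj.
Qed.

Definition q0 : 'I_4 := @Ordinal 4 0 isT.
Definition q1 : 'I_4 := @Ordinal 4 1 isT.
Definition q2 : 'I_4 := @Ordinal 4 2 isT.
Definition q3 : 'I_4 := @Ordinal 4 3 isT.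

Lemma big_ord4 (R : nmodType) (F : 'I_4 -> R) :
  \sum_(k < 4) F k = F q0 + F q1 + F q2 + F q3.
Proof.
rewrite !big_ord_recl big_ord0 addr0 !addrA.
by congr (F _ + F _ + F _ + F _); apply: val_inj.
Qed.

Lemma ord4P (P : 'I_4 -> Prop) : P q0 -> P q1 -> P q2 -> P q3 -> forall k, P k.
Proof. by move=> P0 P1 P2 P3 [[|[|[|[|//]]]] lt_k4]; rewrite (bool_irrelevance lt_k4 isT). Qed.

Lemma ord_liftP n (P : 'I_n.+1 -> Prop) :
  P ord0 -> (forall k, P (lift ord0 k)) -> forall k, P k.
Proof. by move=> P0 PS k; case: (unliftP ord0 k) => [k' ->|->]. Qed.

Lemma ord_lift_inv n (P : 'I_n.+1 -> Prop) :
  (forall k, P k) -> P ord0 /\ forall k, P (lift ord0 k).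
Proof. by []. Qed.

(** * Lower bound: simultaneous diagonalisation of two slices *)

Definition bform (R : nzRingType) m n (x : 'I_m -> R) (M : 'I_m -> 'I_n -> R)
  (z : 'I_n -> R) := \sum_i \sum_j x i * M i j * z j.

Lemma tensor_mapE (R : comNzRingType) n1 n2 n3 m1 m2 m3 (A1 : 'M[R]_(m1, n1))
    (A2 : 'M[R]_(m2, n2)) (A3 : 'M[R]_(m3, n3)) (T : tensor R n1 n2 n3) a b c :
  tensor_map A1 A2 A3 T a b c = \sum_k A3 c k * bform (A1 a) (tslice T k) (A2 b).
Proof.
rewrite /tensor_map /bform; under [RHS]eq_bigr do rewrite mulr_sumr.
rewrite [RHS]exchange_big; apply: eq_bigr => i _; under [RHS]eq_bigr do rewrite mulr_sumr.
rewrite [RHS]exchange_big; apply: eq_bigr => j _; apply: eq_bigr => k _.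
by rewrite /tslice; ring.
Qed.

Lemma restricts_to_unit_diag (R : comUnitRingType) n1 n2 r (T : tensor R n1 n2 r)
    (x : 'I_r -> 'I_n1 -> R) (z : 'I_r -> 'I_n2 -> R) :
  (forall a b k, a != b -> bform (x a) (tslice T k) (z b) = 0) ->
  \matrix_(a, k) bform (x a) (tslice T k) (z a) \in unitmx ->
  restricts_to_unit T r.
Proof.
set D := \matrix_(a, k) _ => xz_orth D_unit.
exists (\matrix_(a, i) x a i), (\matrix_(b, j) z b j), (invmx D)^T.
have mxK (n : nat) (y : 'I_r -> 'I_n -> R) a : (\matrix_(a, i) y a i) a = y a.
  by apply: functional_extensionality => i; rewrite mxE.
apply: tensor_ext => a b c; rewrite tensor_mapE !mxK /unit_tensor.
have [<-|neq_ab] := eqVneq a b; last first.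
  by rewrite big1 // => k _; rewrite xz_orth // mulr0.
transitivity ((D *m invmx D) a c); last by rewrite mulmxV // mxE; case: (a == c).
by rewrite mxE; apply: eq_bigr => k _; rewrite !mxE mulrC.
Qed.

Definition cross (R : nzRingType) (u v : 'I_3 -> R) : 'I_3 -> R := fun i =>
  match val i with
  | 0 => u i1 * v i2 - u i2 * v i1
  | 1 => u i2 * v i0 - u i0 * v i2
  | _ => u i0 * v i1 - u i1 * v i0
  end.

Section Pencil.
Variables (R : fieldType) (T : tensor R 3 3 2).
Local Notation S0 := (tslice T ord0).
Local Notation S1 := (tslice T ord_max).

Definition pencil_left := cross (fun i => S1 i i0) (fun i => S0 i i0).
Definition pencil_right := cross (S1 i0) (S0 i0).

(* With x = (e_0, pencil_left) and z = (e_0, pencil_right) both slices are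
   diagonal, and this is the determinant of their diagonal entries. *)
Definition restr2_poly :=
  S0 i0 i0 * bform pencil_left S1 pencil_right - S1 i0 i0 * bform pencil_left S0 pencil_right.

Lemma restricts2_of_restr2_poly : restr2_poly != 0 -> restricts_to_unit T 2.
Proof.
move=> restr2_neq0; pose e0 (i : 'I_3) : R := if val i is 0 then 1 else 0.
pose x (a : 'I_2) := if a == ord0 then e0 else pencil_left.
pose z (a : 'I_2) := if a == ord0 then e0 else pencil_right.
apply: (@restricts_to_unit_diag _ _ _ _ T x z).
  move=> a b k; case: (ord2_cases a) => ->; case: (ord2_cases b) => -> // _;
  by case: (ord2_cases k) => ->;
    rewrite /x /z /= /bform !big_ord3 /e0 /pencil_left /pencil_right /cross /tslice /=; ring.
rewrite unitmxE unitfE det_mx22 !mxE /x /z /=.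
suff e0_e0 k : bform e0 (tslice T k) e0 = T i0 i0 k by rewrite !e0_e0.
by rewrite /bform !big_ord3 /e0 /tslice /=; ring.
Qed.

End Pencil.

(** * Upper bound: minors of the slices of a restriction to I_3 *)

Definition contract (R : nzRingType) n1 n2 n3 (T : tensor R n1 n2 n3) (y : 'I_n3 -> R) :
  'M[R]_(n1, n2) := \matrix_(i, j) \sum_k y k * T i j k.

Lemma mul_col_row_minor (R : comNzRingType) m n (u : 'cV[R]_m) (v : 'rV[R]_n) i i' j j' :
  (u *m v) i j * (u *m v) i' j' = (u *m v) i j' * (u *m v) i' j.
Proof. by rewrite !mxE !big_ord1; ring. Qed.

Section UnitRestriction.
Variables (R : fieldType) (n m : nat) (T : tensor R n n m).
Variables (A1 A2 : 'M[R]_n) (A3 : 'M[R]_(n, m)).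
Hypothesis TI : tensor_map A1 A2 A3 T = @unit_tensor R n.

Lemma unit_restriction_unitmx1 : A1 \in unitmx.
Proof.
pose G := \matrix_(i, b) \sum_j \sum_k A2 b j * A3 b k * T i j k.
suff /mulmx1_unit[] : A1 *m G = 1%:M by [].
apply/matrixP => a b; rewrite !mxE.
transitivity (tensor_map A1 A2 A3 T a b b).
  apply: eq_bigr => i _; rewrite mxE mulr_sumr; apply: eq_bigr => j _.
  by rewrite mulr_sumr; apply: eq_bigr => k _; ring.
by rewrite TI /unit_tensor eqxx andbT; case: (a == b).
Qed.

Lemma unit_restriction_unitmx2 : A2 \in unitmx.
Proof.
pose G := \matrix_(j, a) \sum_i \sum_k A1 a i * A3 a k * T i j k.
suff /mulmx1_unit[] : A2 *m G = 1%:M by [].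
apply/matrixP => b a; rewrite !mxE.
transitivity (tensor_map A1 A2 A3 T a b a).
  rewrite /tensor_map exchange_big; apply: eq_bigr => j _; rewrite mxE mulr_sumr.
  by apply: eq_bigr => i _; rewrite mulr_sumr; apply: eq_bigr => k _; ring.
by rewrite TI /unit_tensor eq_sym andbb; case: (b == a).
Qed.

Lemma unit_restriction_contract c : A1 *m contract T (A3 c) *m A2^T = delta_mx c c.
Proof.
apply/matrixP => a b; rewrite !mxE.
transitivity (tensor_map A1 A2 A3 T a b c).
  rewrite /tensor_map exchange_big; apply: eq_bigr => j _; rewrite !mxE mulr_suml.
  apply: eq_bigr => i _; rewrite !mxE mulr_sumr mulr_suml.
  by apply: eq_bigr => k _; ring.
rewrite TI /unit_tensor; have [->|neq_bc] := eqVneq b c; first by rewrite andbT; case: (a == c).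
by rewrite andbF; case: (a == c).
Qed.

Lemma unit_restriction_rank1 c :
  contract T (A3 c) = col c (invmx A1) *m row c (invmx A2^T).
Proof.
have A2T_unit : A2^T \in unitmx by rewrite unitmx_tr unit_restriction_unitmx2.
rewrite colE rowE mulmxA -(mulmxA _ (delta_mx c 0)) mul_delta_mx.
rewrite -unit_restriction_contract !mulmxA mulVmx ?unit_restriction_unitmx1 // mul1mx.
by rewrite -mulmxA mulmxV // mulmx1.
Qed.

Lemma unit_restriction_row_dep (lam mu : R) c c' :
  (forall k, lam * A3 c k = mu * A3 c' k) -> lam = mu * (c == c')%:R.
Proof.
move=> dep.
have -> : lam = lam * tensor_map A1 A2 A3 T c c c by rewrite TI /unit_tensor !eqxx mulr1.
have -> : (c == c')%:R = tensor_map A1 A2 A3 T c c c'.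
  by rewrite TI /unit_tensor eqxx; case: (c == c').
by rewrite !tensor_mapE !mulr_sumr; apply: eq_bigr => k _; rewrite !mulrA dep.
Qed.

End UnitRestriction.

Section Minors.
Variable R : comNzRingType.

Definition ra (i : 'I_3) : 'I_3 := lift i ord0.
Definition rc (i : 'I_3) : 'I_3 := lift i ord_max.

(* The 2 x 2 minor of M complementary to the entry (i, j). *)
Definition minor2 (M : 'M[R]_3) (i j : 'I_3) :=
  M (ra i) (ra j) * M (rc i) (rc j) - M (ra i) (rc j) * M (rc i) (ra j).

Definition mixed_minor (T : tensor R 3 3 4) (k l : 'I_4) (i j : 'I_3) :=
  T (ra i) (ra j) k * T (rc i) (rc j) l - T (ra i) (rc j) k * T (rc i) (ra j) l.

Definition minor_coef (T : tensor R 3 3 4) (k l : 'I_4) (i j : 'I_3) :=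
  if k == l then mixed_minor T k k i j else mixed_minor T k l i j + mixed_minor T l k i j.

(* The monomials y_k y_l, k <= l, other than y_3^2. *)
Definition mon1 (c : 'I_9) : 'I_4 :=
  match val c with 0 | 1 | 2 | 3 => q0 | 4 | 5 | 6 => q1 | _ => q2 end.
Definition mon2 (c : 'I_9) : 'I_4 :=
  match val c with 0 => q0 | 1 | 4 => q1 | 2 | 5 | 7 => q2 | _ => q3 end.

Definition minor_row (r : 'I_9) : 'I_3 :=
  match val r with 0 | 1 | 2 => i0 | 3 | 4 | 5 => i1 | _ => i2 end.
Definition minor_col (r : 'I_9) : 'I_3 :=
  match val r with 0 | 3 | 6 => i0 | 1 | 4 | 7 => i1 | _ => i2 end.

Definition minor_coef_mx (T : tensor R 3 3 4) : 'M[R]_9 :=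
  \matrix_(c, r) minor_coef T (mon1 c) (mon2 c) (minor_row r) (minor_col r).

Definition minor_det (T : tensor R 3 3 4) := \det (minor_coef_mx T).

Definition monomials (y : 'I_4 -> R) : 'rV[R]_9 := \row_c (y (mon1 c) * y (mon2 c)).

Definition last_coefs (T : tensor R 3 3 4) : 'rV[R]_9 :=
  \row_r mixed_minor T q3 q3 (minor_row r) (minor_col r).

Lemma minor2_contract (T : tensor R 3 3 4) (y : 'I_4 -> R) i j :
  minor2 (contract T y) i j =
  \sum_c y (mon1 c) * y (mon2 c) * minor_coef T (mon1 c) (mon2 c) i j +
  y q3 ^+ 2 * mixed_minor T q3 q3 i j.
Proof.
rewrite /minor2 !mxE !big_ord4 !big_ord_recl big_ord0 /mon1 /mon2 /minor_coef /=.
by rewrite /mixed_minor; ring.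
Qed.

Lemma monomials_mul_minor_coef (T : tensor R 3 3 4) (y : 'I_4 -> R) :
  monomials y *m minor_coef_mx T =
  \row_r minor2 (contract T y) (minor_row r) (minor_col r) - y q3 ^+ 2 *: last_coefs T.
Proof.
apply/rowP => r; rewrite !mxE minor2_contract addrK.
by apply: eq_bigr => c _; rewrite !mxE.
Qed.

End Minors.

Section MonomialVectors.
Variable R : fieldType.
Implicit Types y : 'I_4 -> R.

Lemma unit_restriction_monomials (T : tensor R 3 3 4) (A1 A2 : 'M[R]_3) (A3 : 'M[R]_(3, 4)) :
  tensor_map A1 A2 A3 T = @unit_tensor R 3 ->
  forall c, monomials (A3 c) *m minor_coef_mx T = - (A3 c q3 ^+ 2) *: last_coefs T.
Proof.
move=> TI c; rewrite monomials_mul_minor_coef scaleNr.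
suff -> : \row_r minor2 (contract T (A3 c)) (minor_row r) (minor_col r) = 0 by rewrite sub0r.
apply/rowP => r; rewrite !mxE /minor2 (unit_restriction_rank1 TI) mul_col_row_minor.
by rewrite subrr.
Qed.

Lemma monomials_eq0 y : monomials y = 0 -> y q3 = 0 -> forall k, y k = 0.
Proof.
move=> /rowP y_mon0 y3_0.
have sq_eq0 (c : 'I_9) : mon1 c = mon2 c -> y (mon1 c) = 0.
  by move=> mon12; have := y_mon0 c; rewrite !mxE -mon12 -expr2 => /eqP; rewrite sqrf_eq0 => /eqP.
apply: ord4P => //; [exact: (sq_eq0 (@Ordinal 9 0 isT)) | exact: (sq_eq0 (@Ordinal 9 4 isT))
  | exact: (sq_eq0 (@Ordinal 9 7 isT))].
Qed.

Lemma monomials_proportional y y' : y q3 != 0 -> y' q3 != 0 ->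
  y' q3 ^+ 2 *: monomials y = y q3 ^+ 2 *: monomials y' ->
  forall k, y' q3 * y k = y q3 * y' k.
Proof.
move=> y3_neq0 y'3_neq0 /rowP eq_mon.
have prop (c : 'I_9) : mon2 c = q3 -> y' q3 * y (mon1 c) = y q3 * y' (mon1 c).
  move=> mon2_3; have := eq_mon c; rewrite !mxE mon2_3 => eq_c.
  apply: (mulfI (mulf_neq0 y3_neq0 y'3_neq0)).
  transitivity (y' q3 ^+ 2 * (y (mon1 c) * y q3)); first by ring.
  by rewrite eq_c; ring.
apply: ord4P; [exact: (prop (@Ordinal 9 3 isT)) | exact: (prop (@Ordinal 9 6 isT))
  | exact: (prop (@Ordinal 9 8 isT)) | exact: mulrC].
Qed.

End MonomialVectors.

Lemma restricts3_minor_det (R : fieldType) (T : tensor R 3 3 4) :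
  restricts_to_unit T 3 -> minor_det T = 0.
Proof.
move=> [A1 [A2 [A3 TI]]]; apply/eqP/det0P.
set y := A3 i0; set y' := A3 i1.
have row_neq0 c : ~ (forall k, A3 c k = 0).
  move=> A3c0; have dep0 k : 1 * A3 c k = 0 * A3 c k by rewrite A3c0 !mulr0.
  by have /eqP := unit_restriction_row_dep TI dep0; rewrite mul0r oner_eq0.
have ker al be : al * y q3 ^+ 2 + be * y' q3 ^+ 2 = 0 ->
    (al *: monomials y + be *: monomials y') *m minor_coef_mx T = 0.
  move=> eq0; rewrite mulmxDl -!scalemxAl !(unit_restriction_monomials TI) !scalerA.
  by rewrite -scalerDl !mulrN -opprD eq0 oppr0 scale0r.
have [y3_0|y3_neq0] := eqVneq (y q3) 0.
  exists (monomials y); last by have := ker 1 0; rewrite scale1r scale0r addr0 y3_0; apply; ring.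
  by apply/eqP => /monomials_eq0 /(_ y3_0); apply: row_neq0.
have [y'3_0|y'3_neq0] := eqVneq (y' q3) 0.
  exists (monomials y'); last by have := ker 0 1; rewrite scale1r scale0r add0r y'3_0; apply; ring.
  by apply/eqP => /monomials_eq0 /(_ y'3_0); apply: row_neq0.
exists (y' q3 ^+ 2 *: monomials y + (- y q3 ^+ 2) *: monomials y'); last by apply: ker; ring.
apply/negP; rewrite scaleNr addr_eq0 opprK => /eqP /monomials_proportional.
move=> /(_ y3_neq0 y'3_neq0) /(unit_restriction_row_dep TI).
by rewrite mulr0; apply/eqP.
Qed.

(** * The certificates *)

Section RegularCertificates.
Variables (R : realFieldType) (n1 n2 n3 : nat).
Local Notation tens := (tensor R n1 n2 n3).

Lemma regular_cross (u v : tens -> 'I_3 -> R) :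
  (forall i, regular (fun T => u T i)) -> (forall i, regular (fun T => v T i)) ->
  forall i, regular (fun T => cross (u T) (v T) i).
Proof.
by move=> u_reg v_reg [[|[|[|//]]] lt_i3]; rewrite /cross /=;
  apply: regularB; apply: regularM.
Qed.

Lemma regular_bform m n (x : tens -> 'I_m -> R) (M : tens -> 'I_m -> 'I_n -> R)
    (z : tens -> 'I_n -> R) :
  (forall i, regular (fun T => x T i)) -> (forall i j, regular (fun T => M T i j)) ->
  (forall j, regular (fun T => z T j)) -> regular (fun T => bform (x T) (M T) (z T)).
Proof.
move=> x_reg M_reg z_reg; apply: regular_sum => i _; apply: regular_sum => j _.
by apply: regularM; first apply: regularM.
Qed.

Lemma regular_restr2_poly (E : tens -> tensor R 3 3 2) :
  (forall i j k, regular (fun T => E T i j k)) -> regular (fun T => restr2_poly (E T)).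
Proof.
move=> E_reg; have S_reg k i j : regular (fun T => tslice (E T) k i j) by apply: E_reg.
have left_reg i : regular (fun T => pencil_left (E T) i) by apply: regular_cross.
have right_reg i : regular (fun T => pencil_right (E T) i) by apply: regular_cross.
by apply: regularB; apply: regularM => //; apply: regular_bform.
Qed.

Lemma regular_minor_det (E : tens -> tensor R 3 3 4) :
  (forall i j k, regular (fun T => E T i j k)) -> regular (fun T => minor_det (E T)).
Proof.
move=> E_reg; apply: regular_det => c r.
apply: (eq_regular (f := fun T => minor_coef (E T) (mon1 c) (mon2 c) (minor_row r) (minor_col r))).
  by move=> T; rewrite mxE.
rewrite /minor_coef; case: (mon1 c == mon2 c); rewrite /mixed_minor;
  by repeat first [apply: regularB | apply: regularD | apply: regularM | apply: E_reg].
Qed.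

End RegularCertificates.

Section Witness.
Variable R : realFieldType.

Definition witness : tensor R 3 3 4 := fun i j k =>
  match val k, val i, val j with
  | 0, 0, 0 | 0, 2, 2 | 1, 0, 2 | 1, 1, 0 | 1, 2, 1 | 2, 1, 1 | 3, 0, 1 => 1
  | 2, 2, 0 => -1
  | _, _, _ => 0
  end.

Lemma restr2_poly_witness : restr2_poly (front_slices (isT : (2 <= 4)%N) witness) = -1.
Proof.
rewrite /restr2_poly /bform !big_ord3 /pencil_left /pencil_right /cross /tslice.
by rewrite /front_slices /witness /=; ring.
Qed.

Lemma restr2_poly_witness3 :
  restr2_poly (front_slices (isT : (2 <= 3)%N) (front_slices (leqnSn 3) witness)) = -1.
Proof.
rewrite /restr2_poly /bform !big_ord3 /pencil_left /pencil_right /cross /tslice.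
by rewrite /front_slices /witness /=; ring.
Qed.

Lemma minor_det_witness : minor_det witness != 0.
Proof.
apply/negP => /det0P [v v_neq0 /rowP vM0]; move/negP: v_neq0; apply; apply/eqP/rowP.
(* one linear equation in the entries of v per column of minor_coef_mx witness *)
do 9 move/ord_lift_inv: vM0 => [+ vM0]; move=> {vM0}.
rewrite /minor_coef_mx !mxE !big_ord_recl !big_ord0 !mxE /minor_coef /mon1 /mon2.
rewrite /minor_row /minor_col /mixed_minor /ra /rc /witness /= => e0 e1 e2 e3 e4 e5 e6 e7 e8.
by do 9 (elim/ord_liftP; first by rewrite mxE; lra); case.
Qed.

End Witness.

Section Certificates.
Variable R : realType.

Definition cert334 (T : tensor R 3 3 4) :=
  restr2_poly (front_slices (isT : (2 <= 4)%N) T) * minor_det T.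

(* The appended slice is the last one of the witness, so that the witness
   is recovered from its first three slices. *)
Definition cert333 (T : tensor R 3 3 3) :=
  restr2_poly (front_slices (isT : (2 <= 3)%N) T) *
  minor_det (add_slice T (tslice (witness R) ord_max)).

Lemma regular_cert334 : regular cert334.
Proof.
by apply: regularM; [apply: regular_restr2_poly | apply: regular_minor_det] => i j k;
  apply: regular_coord.
Qed.

Lemma regular_cert333 : regular cert333.
Proof.
apply: regularM; first by apply: regular_restr2_poly => i j k; apply: regular_coord.
apply: regular_minor_det => i j k; rewrite /add_slice.
by case: unlift => [k'|]; [apply: regular_coord | apply: regular_cst].
Qed.

Lemma cert334_witness : cert334 (witness R) != 0.
Proof. by rewrite /cert334 restr2_poly_witness mulN1r oppr_eq0 minor_det_witness. Qed.

Lemma cert333_witness : cert333 (front_slices (leqnSn 3) (witness R)) != 0.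
Proof.
by rewrite /cert333 restr2_poly_witness3 add_slice_front mulN1r oppr_eq0 minor_det_witness.
Qed.

Lemma cert334_subrank T : cert334 T != 0 -> is_subrank T 2.
Proof.
rewrite mulf_eq0 negb_or => /andP[restr2_neq0 det_neq0].
apply: is_subrankP; first exact: restricts_to_unit_front (restricts2_of_restr2_poly restr2_neq0).
by move=> T3; move/eqP: det_neq0; apply; apply: restricts3_minor_det.
Qed.

Lemma cert333_subrank T : cert333 T != 0 -> is_subrank T 2.
Proof.
rewrite mulf_eq0 negb_or => /andP[restr2_neq0 det_neq0].
apply: is_subrankP; first exact: restricts_to_unit_front (restricts2_of_restr2_poly restr2_neq0).
move=> T3; move/eqP: det_neq0; apply; apply: restricts3_minor_det.
by apply: (restricts_to_unit_front (le_mn := leqnSn 3)); rewrite front_add_slice.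
Qed.

End Certificates.

Theorem corollary4p6 (R : realType) :
  (forall r : nat, typical_subrank R 3 3 3 r <-> r = 2%N) /\
  (forall r : nat, typical_subrank R 3 3 4 r <-> r = 2%N).
Proof.
split.
  exact: typical_subrank_of_regular (@regular_cert333 R) (cert333_witness R)
    (@cert333_subrank R).
exact: typical_subrank_of_regular (@regular_cert334 R) (cert334_witness R)
  (@cert334_subrank R).
Qed.
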